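(* Let $N$ be an even positive integer and $\hbar=1/(2\pi N)$. For $n,m\in\{0,\dots,N-1\}$ the matrix elements of $F$ on $\mathcal{H}_\hbar(0)$ are \[ (\Phi_n^{(0,0)},F\Phi_m^{(0,0)})_P=\sum_{a=0}^{N-1}(\mathcal{F}^N)^{-1}_{na}\,M^{(n)}_{am}, \] where $(\mathcal{F}^N)^{-1}_{na}=e^{2\pi i na/N}/\sqrt N$, $\mathcal{F}^{N/2}_{jk}=e^{-2\pi i jk/(N/2)}/\sqrt{N/2}$, and $M^{(n)}$ is the $N\times N$ block-diagonal matrix with $M^{(n)}_{am}=0$ unless $a,m$ both lie in $\{0,\dots,N/2-1\}$ or both lie in $\{N/2,\dots,N-1\}$, and: for $n$ even, $M^{(n)}_{am}=\mathcal{F}^{N/2}_{am}$ if $a,m<N/2$ and $M^{(n)}_{am}=\mathcal{F}^{N/2}_{a-N/2,\,m-N/2}$ if $a,m\ge N/2$; for $n$ odd, $M^{(n)}_{am}=e^{i\pi(n-2m)/N}\mathcal{F}^{N/2}_{am}$ if $a,m<N/2$ and $M^{(n)}_{am}=e^{i\pi(n-(2m-N))/N}\mathcal{F}^{N/2}_{a-N/2,\,m-N/2}$ if $a,m\ge N/2$.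
   Context: On $L^2(\mathbb{R})$ with $[\widehat{x},\widehat{p}]=i\hbar$, $|x\rangle_x$ are position eigen-distributions, and $\Phi_m^{(0,0)}=N^{-1/2}\sum_{k\in\mathbb{Z}}|m/N+k\rangle_x$ ($m\in\mathbb{Z}$; $\Phi_{m+N}^{(0,0)}=\Phi_m^{(0,0)}$). $\mathcal{H}_\hbar(0)$ is the $N$-dimensional space spanned by $\Phi_0^{(0,0)},\dots,\Phi_{N-1}^{(0,0)}$, equipped with the paper's inner product $(\cdot,\cdot)_P$, with respect to which these vectors are orthonormal. $X^s=e^{is\widehat{x}/\hbar}$, $Y^s=e^{is\widehat{p}/\hbar}$ for real $s$. Projections $L,R,E_x,O_x$ are multiplication in position representation by the indicators of $[0,1/2)+\mathbb{Z}$, $[1/2,1)+\mathbb{Z}$, $[0,1)+2\mathbb{Z}$, $[1,2)+2\mathbb{Z}$; $B,T,E_p,O_p$ are the analogous projections in momentum representation (momentum eigen-distributions normalized by $\langle x|p\rangle=(2\pi\hbar)^{-1/2}e^{ixp/\hbar}$) onto $[0,1/2)+\mathbb{Z}$, $[1/2,1)+\mathbb{Z}$, $[0,1)+2\mathbb{Z}$, $[1,2)+2\mathbb{Z}$; all act on $\delta$-comb distributions in the natural way. $S=\exp\!\left(-\frac{i\log2}{2\hbar}(\widehat{x}\widehat{p}+\widehat{p}\widehat{x})\right)$, acting by $S|x\rangle_x=\sqrt2|2x\rangle_x$. The propagator is $F=S(L+X^{-1}R)(E_p+Y^{-1/2}O_p)$, which the paper also writes as $(E_x+X^{-1/2}O_x)(B+Y^{-1}T)S$;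 $F$ maps $\mathcal{H}_\hbar(0)$ into itself. *)

From Stdlib Require Import Reals ZArith.
From Coquelicot Require Import Coquelicot.
Open Scope R_scope.

Definition expi (theta : R) : C := (cos theta, sin theta).

Fixpoint csum (n : nat) (f : nat -> C) : C :=
  match n with
  | O => RtoC 0
  | S k => Cplus (csum k f) (f k)
  end.

Section Model.
Variable N : nat.

Definition hbar : R := / (2 * PI * INR N).

(* Lattice representation: a delta-comb distribution supported on
   (1/(2N)) Z is represented by its coefficient function f : Z -> C,
   standing for  sum_{j in Z} f j |j/(2N)>_x .  *)
Definition comb := Z -> C.
Definition xpt (j : Z) : R := IZR j / (2 * INR N).

(* Phi_m^{(0,0)} = N^{-1/2} sum_k |m/N + k>_x ;  m/N + k = (2m + 2Nk)/(2N) *)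
Definition Phi (m : Z) : comb := fun j =>
  if Z.eqb (Z.modulo (j - 2 * m) (2 * Z.of_nat N)) 0
  then RtoC (/ sqrt (INR N)) else RtoC 0.

Definition ind_half0 (x : R) : bool :=
  if Rlt_dec (frac_part x) (1/2) then true else false.
Definition ind_half1 (x : R) : bool := negb (ind_half0 x).
Definition ind_even (x : R) : bool :=
  if Rlt_dec (frac_part (x / 2)) (1/2) then true else false.
Definition ind_odd (x : R) : bool := negb (ind_even x).

Definition bC (b : bool) : C := if b then RtoC 1 else RtoC 0.

Definition posproj (chi : R -> bool) (f : comb) : comb :=
  fun j => Cmult (bC (chi (xpt j))) (f j).

Definition L_ := posproj ind_half0.
Definition R_ := posproj ind_half1.

Definition Xpow (s : R) (f : comb) : comb :=
  fun j => Cmult (expi (s * xpt j / hbar)) (f j).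

(* Y^s = e^{i s p/hbar} acts by Y^s |x> = |x - s>.  For s = k/(2N) this is
   (Y^s f) j = f (j + k).  Ypow_lat k is Y^{k/(2N)}. *)
Definition Ypow_lat (k : Z) (f : comb) : comb := fun j => f (j + k)%Z.

(* S |x> = sqrt 2 |2x> *)
Definition S_ (f : comb) : comb := fun j =>
  if Z.even j then Cmult (RtoC (sqrt 2)) (f (Z.div j 2)) else RtoC 0.

(* Momentum-representation projection onto the set with indicator chi,
   for a comb on (1/(2N))Z that is periodic of period P (P >= 1) in x.
   With K = 2NP, its momentum representation is the comb
     sum_{t in Z} d_t |q_t>_p ,   q_t = 2 pi hbar t / P,
     d_t = (2 pi hbar)^{1/2} / P * sum_{r=0}^{K-1} f r e^{-i x_r q_t / hbar},
   (d is K-periodic, momentum period 2 pi hbar 2N = 2).  Multiplying d_t by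
   chi(q_t) (chi of momentum period dividing 2) and transforming back with
   <x|p> = (2 pi hbar)^{-1/2} e^{ixp/hbar} gives the comb below. *)
Definition mom_coef (P : nat) (f : comb) (t : nat) : C :=
  let K := (2 * N * P)%nat in
  let q := 2 * PI * hbar * INR t / INR P in
  Cmult (RtoC (sqrt (2 * PI * hbar) / INR P))
        (csum K (fun r => Cmult (f (Z.of_nat r)) (expi (- (xpt (Z.of_nat r) * q / hbar))))).

Definition momproj (P : nat) (chi : R -> bool) (f : comb) : comb := fun s =>
  let K := (2 * N * P)%nat in
  Cmult (RtoC (/ sqrt (2 * PI * hbar) * (INR P / INR K)))
    (csum K (fun t =>
       let q := 2 * PI * hbar * INR t / INR P in
       Cmult (Cmult (bC (chi q)) (mom_coef P f t)) (expi (xpt s * q / hbar)))).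

Definition E_p := momproj 1 ind_even.
Definition O_p := momproj 1 ind_odd.

Definition cadd (f g : comb) : comb := fun j => Cplus (f j) (g j).

(* F = S (L + X^{-1} R) (E_p + Y^{-1/2} O_p), applied to elements of
   H_hbar(0) (combs of x-period 1, hence P = 1 in the momentum projections);
   Y^{-1/2} = Ypow_lat (-N). *)
Definition F_op (f : comb) : comb :=
  let g := cadd (E_p f) (Ypow_lat (- Z.of_nat N) (O_p f)) in
  S_ (cadd (L_ g) (Xpow (-1) (R_ g))).

(* inner product (.,.)_P on H_hbar(0), making Phi_0..Phi_{N-1} orthonormal:
   psi = sum_n a_n Phi_n with a_n = sqrt N * (coefficient of |n/N>_x). *)
Definition innerP (psi phi : comb) : C :=
  csum N (fun n =>
    Cmult (Cconj (Cmult (RtoC (sqrt (INR N))) (psi (2 * Z.of_nat n)%Z)))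
          (Cmult (RtoC (sqrt (INR N))) (phi (2 * Z.of_nat n)%Z))).

Definition FNinv (n a : nat) : C :=
  Cmult (expi (2 * PI * INR n * INR a / INR N)) (RtoC (/ sqrt (INR N))).
Definition Fhalf (j k : nat) : C :=
  Cmult (expi (- (2 * PI * INR j * INR k / (INR N / 2)))) (RtoC (/ sqrt (INR N / 2))).

Definition Mmat (n a m : nat) : C :=
  let h := Nat.div N 2 in
  if andb (a <? h)%nat (m <? h)%nat then
    (if Nat.even n then Fhalf a m
     else Cmult (expi (PI * (INR n - 2 * INR m) / INR N)) (Fhalf a m))
  else if andb (h <=? a)%nat (h <=? m)%nat then
    (if Nat.even n then Fhalf (a - h) (m - h)
     else Cmult (expi (PI * (INR n - (2 * INR m - INR N)) / INR N)) (Fhalf (a - h) (m - h)))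
  else RtoC 0.

End Model.

(* Both sides reduce to (sqrt 2 / N) * sum_{a < N/2} e^{i pi (2a + eps) (n - 2m) / N} with
   eps = n mod 2.  On the left, (Phi_n, .)_P samples F Phi_m at x = n/N; through S this is
   the point n/(2N) < 1/2, where L is the identity, leaving
   (E_p Phi_m)(n/(2N)) + (O_p Phi_m)(n/(2N) - 1/2).  The momentum projections of
   Phi_m are finite sums of waves e^{i pi t (x - 2m) / N} over the band t < N resp.
   N <= t < 2N.  Because N is even, after the shift by Y^{-1/2} the t-th odd-band wave is
   (-1)^(n+t) times the t-th even-band one, so the waves with t of the wrong parity
   cancel and the others double.  On the right, only the diagonal block of M^(n) containing
   m contributes, and the phases of the two Fourier kernels (and of the odd-n twist) add up,
   modulo 2 pi, to the same waves. *)

From Stdlib Require Import Reals ZArith Lia Lra.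
From Coquelicot Require Import Coquelicot.
Open Scope R_scope.

Lemma csum_ext n f g : (forall k, (k < n)%nat -> f k = g k) -> csum n f = csum n g.
Proof.
  induction n as [|n IH]; intros Hfg; simpl; [reflexivity|].
  rewrite IH by (intros; apply Hfg; lia). rewrite Hfg by lia. reflexivity.
Qed.

Lemma csum_add n f g : csum n (fun k => Cplus (f k) (g k)) = Cplus (csum n f) (csum n g).
Proof. induction n as [|n IH]; simpl; [ring|]. rewrite IH. ring. Qed.

Lemma csum_scal n c f : csum n (fun k => Cmult c (f k)) = Cmult c (csum n f).
Proof. induction n as [|n IH]; simpl; [ring|]. rewrite IH. ring. Qed.

Lemma csum_split a b f : csum (a + b) f = Cplus (csum a f) (csum b (fun i => f (a + i)%nat)).
Proof.
  induction b as [|b IH]; simpl; [rewrite Nat.add_0_r; ring|].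
  rewrite Nat.add_succ_r. simpl. rewrite IH. ring.
Qed.

Lemma csum_eq0 n f : (forall k, (k < n)%nat -> f k = RtoC 0) -> csum n f = RtoC 0.
Proof.
  induction n as [|n IH]; intros Hf; simpl; [reflexivity|].
  rewrite IH by (intros; apply Hf; lia). rewrite Hf by lia. ring.
Qed.

Lemma csum_delta n k f : (k < n)%nat ->
  (forall i, (i < n)%nat -> i <> k -> f i = RtoC 0) -> csum n f = f k.
Proof.
  induction n as [|n IH]; intros Hk Hf; [lia|]. simpl.
  destruct (Nat.eq_dec k n) as [->|Hkn].
  - rewrite csum_eq0 by (intros; apply Hf; lia). ring.
  - rewrite IH by (lia || (intros; apply Hf; lia)). rewrite (Hf n) by lia. ring.
Qed.

Lemma csum_pairs h f :
  csum (2 * h) f = csum h (fun a => Cplus (f (2 * a)%nat) (f (2 * a + 1)%nat)).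
Proof.
  induction h as [|h IH]; [reflexivity|].
  replace (2 * S h)%nat with (S (S (2 * h))) by lia.
  change (Cplus (Cplus (csum (2 * h) f) (f (2 * h)%nat)) (f (S (2 * h))) =
          Cplus (csum h (fun a => Cplus (f (2 * a)%nat) (f (2 * a + 1)%nat)))
                (Cplus (f (2 * h)%nat) (f (2 * h + 1)%nat))).
  rewrite IH, Nat.add_1_r. ring.
Qed.

Lemma expi_0 : expi 0 = RtoC 1.
Proof. unfold expi. rewrite cos_0, sin_0. reflexivity. Qed.

Lemma expi_add a b : expi (a + b) = Cmult (expi a) (expi b).
Proof. unfold expi, Cmult; simpl. rewrite cos_plus, sin_plus. f_equal; ring. Qed.

Lemma expi_congr_2PI x y j j' : x + 2 * INR j * PI = y + 2 * INR j' * PI -> expi x = expi y.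
Proof.
  intros Hxy. transitivity (expi (x + 2 * INR j * PI)).
  - unfold expi. rewrite cos_period, sin_period. reflexivity.
  - rewrite Hxy. unfold expi. rewrite cos_period, sin_period. reflexivity.
Qed.

Lemma expi_nat_PI k : expi (INR k * PI) = if Nat.odd k then Copp (RtoC 1) else RtoC 1.
Proof.
  rewrite (expi_congr_2PI _ (INR (Nat.b2n (Nat.odd k)) * PI) 0 (Nat.div2 k)).
  - destruct (Nat.odd k); simpl INR; unfold expi.
    + rewrite Rmult_1_l, cos_PI, sin_PI. unfold Copp, RtoC; simpl. f_equal; ring.
    + rewrite Rmult_0_l, cos_0, sin_0. reflexivity.
  - rewrite (Nat.div2_odd k) at 1. rewrite plus_INR, mult_INR. simpl INR. ring.
Qed.

Lemma csum_parity_filter n h g :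
  csum (2 * h) (fun t => Cmult (g t) (Cplus (RtoC 1) (expi (INR (n + t) * PI))))
  = Cmult (RtoC 2) (csum h (fun a => g (2 * a + Nat.b2n (Nat.odd n))%nat)).
Proof.
  rewrite csum_pairs, <- csum_scal. apply csum_ext. intros a _.
  rewrite !expi_nat_PI, Nat.add_assoc, Nat.odd_add_mul_2, Nat.odd_add, Nat.odd_add_mul_2.
  replace (RtoC 2) with (Cplus (RtoC 1) (RtoC 1)) by (rewrite <- RtoC_plus; f_equal; ring).
  destruct (Nat.odd n); simpl; rewrite ?Nat.add_0_r; ring.
Qed.

Lemma frac_part_id x : 0 <= x < 1 -> frac_part x = x.
Proof.
  intros Hx. destruct (Int_part_frac_part_spec x 0 x Hx) as [_ Hfrac]; [simpl; ring|].
  symmetry. exact Hfrac.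
Qed.

Lemma inv_sqrt_mul_inv_sqrt_half x : 0 < x -> / sqrt x * / sqrt (x / 2) = sqrt 2 / x.
Proof.
  intros Hx. rewrite sqrt_div_alt by lra.
  pose proof (sqrt_lt_R0 _ Hx). pose proof (sqrt_lt_R0 2 ltac:(lra)).
  rewrite <- (sqrt_sqrt x) at 3 by lra. field. lra.
Qed.

Lemma Cconj_RtoC r : Cconj (RtoC r) = RtoC r.
Proof. unfold Cconj, RtoC; simpl. f_equal. ring. Qed.

Section Model.
Variable N : nat.
Hypothesis N_pos : (0 < N)%nat.

Let INR_N_pos : 0 < INR N := lt_0_INR N N_pos.

Lemma Phi_diag z : Phi N z (2 * z)%Z = RtoC (/ sqrt (INR N)).
Proof. unfold Phi. rewrite Z.sub_diag, Zmod_0_l. reflexivity. Qed.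

Lemma Phi_off z j : (0 <= j < 2 * Z.of_nat N)%Z -> (0 <= 2 * z < 2 * Z.of_nat N)%Z ->
  j <> (2 * z)%Z -> Phi N z j = RtoC 0.
Proof.
  intros Hj Hz Hjz. unfold Phi.
  destruct (Z.eqb_spec ((j - 2 * z) mod (2 * Z.of_nat N)) 0) as [Hmod|]; [|reflexivity].
  apply Z.mod_divide in Hmod as [c Hc]; [|lia].
  destruct (Z.lt_trichotomy c 0) as [|[|]]; nia.
Qed.

Lemma innerP_Phi_l n psi : (n < N)%nat ->
  innerP N (Phi N (Z.of_nat n)) psi = Cmult (RtoC (sqrt (INR N))) (psi (2 * Z.of_nat n)%Z).
Proof.
  intros Hn. pose proof (sqrt_lt_R0 _ INR_N_pos).
  unfold innerP. rewrite (csum_delta _ n); [|lia|].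
  - rewrite Phi_diag, <- RtoC_mult, Rinv_r, Cconj_RtoC by lra. ring.
  - intros i Hi Hin. rewrite Phi_off by lia. rewrite <- RtoC_mult, Rmult_0_r, Cconj_RtoC. ring.
Qed.

Lemma ind_half0_xpt j : (j < N)%nat -> ind_half0 (xpt N (Z.of_nat j)) = true.
Proof.
  intros Hj. apply lt_INR in Hj. pose proof (pos_INR j).
  unfold ind_half0, xpt. rewrite <- INR_IZR_INZ.
  assert (Hx : 0 <= INR j / (2 * INR N) < 1 / 2).
  { split; [apply Rdiv_le_0_compat; lra|].
    apply Rmult_lt_reg_r with (2 * INR N); [lra|]. field_simplify; lra. }
  rewrite frac_part_id by lra. destruct (Rlt_dec _ _); [reflexivity|lra].
Qed.

Lemma F_op_xpt f n : (n < N)%nat ->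
  F_op N f (2 * Z.of_nat n)%Z =
  Cmult (RtoC (sqrt 2)) (Cplus (E_p N f (Z.of_nat n)) (O_p N f (Z.of_nat n - Z.of_nat N)%Z)).
Proof.
  intros Hn. unfold F_op, S_. rewrite Z.even_mul. simpl Z.even. simpl orb. cbv iota.
  rewrite (Z.mul_comm 2), Z.div_mul by lia.
  unfold cadd, L_, R_, Xpow, posproj, ind_half1, Ypow_lat. rewrite ind_half0_xpt by assumption.
  simpl bC. change (Z.of_nat n - Z.of_nat N)%Z with (Z.of_nat n + - Z.of_nat N)%Z. ring.
Qed.

Definition wave (s : R) (m t : nat) : C := expi (PI * INR t * (s - 2 * INR m) / INR N).

Lemma momproj_Phi chi m s : (m < N)%nat ->
  momproj N 1 chi (Phi N (Z.of_nat m)) s =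
  Cmult (RtoC (/ (2 * INR N) * / sqrt (INR N)))
    (csum (2 * N) (fun t => Cmult (bC (chi (INR t / INR N))) (wave (IZR s) m t))).
Proof.
  intros Hm. pose proof PI_RGT_0.
  assert (Hhbar : 0 < 2 * PI * hbar N).
  { unfold hbar. apply Rmult_lt_0_compat; [lra|]. apply Rinv_0_lt_compat. nra. }
  pose proof (sqrt_lt_R0 _ Hhbar). pose proof (sqrt_lt_R0 _ INR_N_pos).
  unfold momproj. rewrite Nat.mul_1_r.
  rewrite (csum_ext _ _ (fun t => Cmult (RtoC (sqrt (2 * PI * hbar N) * / sqrt (INR N)))
     (Cmult (bC (chi (INR t / INR N))) (wave (IZR s) m t)))).
  2:{ intros t Ht. unfold mom_coef. rewrite Nat.mul_1_r.
      rewrite (csum_delta _ (2 * m)); [|lia|].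
      2:{ intros i Hi Him. rewrite Phi_off by lia. apply Cmult_0_l. }
      rewrite Nat2Z.inj_mul. change (Z.of_nat 2) with 2%Z. rewrite Phi_diag.
      replace (2 * PI * hbar N * INR t / INR 1) with (INR t / INR N)
        by (unfold hbar; simpl INR; field; lra).
      assert (Hphase : Cmult (expi (- (xpt N (2 * Z.of_nat m)%Z * (INR t / INR N) / hbar N)))
                             (expi (xpt N s * (INR t / INR N) / hbar N)) = wave (IZR s) m t).
      { unfold wave. rewrite <- expi_add. f_equal.
        unfold xpt, hbar. rewrite mult_IZR, <- INR_IZR_INZ. field. lra. }
      rewrite <- Hphase. simpl INR. rewrite Rdiv_1_r, RtoC_mult. ring. }
  rewrite csum_scal, Cmult_assoc, <- RtoC_mult. do 2 f_equal.
  rewrite mult_INR. simpl INR. field. lra.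
Qed.

Lemma ind_even_lattice t : (t < 2 * N)%nat -> ind_even (INR t / INR N) = (t <? N)%nat.
Proof.
  intros Ht. apply lt_INR in Ht. rewrite mult_INR in Ht. simpl INR in Ht. pose proof (pos_INR t).
  set (x := INR t / INR N / 2).
  assert (Hx : x * (2 * INR N) = INR t) by (unfold x; field; lra).
  unfold ind_even. fold x. rewrite frac_part_id by nra.
  destruct (Rlt_dec x (1 / 2)); destruct (Nat.ltb_spec t N) as [HtN|HtN]; try reflexivity.
  - apply le_INR in HtN. nra.
  - apply lt_INR in HtN. nra.
Qed.

Lemma E_p_Phi m s : (m < N)%nat ->
  E_p N (Phi N (Z.of_nat m)) s =
  Cmult (RtoC (/ (2 * INR N) * / sqrt (INR N))) (csum N (wave (IZR s) m)).
Proof.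
  intros Hm. unfold E_p. rewrite momproj_Phi by assumption. f_equal.
  replace (2 * N)%nat with (N + N)%nat by lia. rewrite csum_split.
  rewrite <- Cplus_0_r. f_equal.
  - apply csum_ext. intros t Ht. rewrite ind_even_lattice by lia.
    replace (t <? N)%nat with true by (symmetry; apply Nat.ltb_lt; lia). simpl. ring.
  - apply csum_eq0. intros t Ht. rewrite ind_even_lattice by lia.
    replace (N + t <? N)%nat with false by (symmetry; apply Nat.ltb_ge; lia). simpl. ring.
Qed.

Lemma O_p_Phi m s : (m < N)%nat ->
  O_p N (Phi N (Z.of_nat m)) s =
  Cmult (RtoC (/ (2 * INR N) * / sqrt (INR N))) (csum N (fun u => wave (IZR s) m (N + u))).
Proof.
  intros Hm. unfold O_p. rewrite momproj_Phi by assumption. f_equal.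
  replace (2 * N)%nat with (N + N)%nat by lia. rewrite csum_split.
  rewrite <- Cplus_0_l. f_equal.
  - apply csum_eq0. intros t Ht. unfold ind_odd. rewrite ind_even_lattice by lia.
    replace (t <? N)%nat with true by (symmetry; apply Nat.ltb_lt; lia). simpl. ring.
  - apply csum_ext. intros t Ht. unfold ind_odd. rewrite ind_even_lattice by lia.
    replace (N + t <? N)%nat with false by (symmetry; apply Nat.ltb_ge; lia). simpl. ring.
Qed.

Section EvenN.
Variable h : nat.
Hypothesis N_double : N = (2 * h)%nat.

Let INR_h : INR h = INR N / 2.
Proof. rewrite N_double, mult_INR. simpl INR. field. Qed.

Lemma wave_shift_N n m t :
  wave (IZR (Z.of_nat n - Z.of_nat N)) m (N + t) =
  Cmult (wave (INR n) m t) (expi (INR (n + t) * PI)).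
Proof.
  unfold wave. rewrite <- expi_add. apply (expi_congr_2PI _ _ (m + h + t) 0).
  rewrite minus_IZR, <- !INR_IZR_INZ, !plus_INR, INR_h. simpl INR. field. lra.
Qed.

Lemma innerP_Phi_F_Phi n m : (n < N)%nat -> (m < N)%nat ->
  innerP N (Phi N (Z.of_nat n)) (F_op N (Phi N (Z.of_nat m))) =
  Cmult (RtoC (sqrt 2 / INR N))
    (csum h (fun a => wave (INR n) m (2 * a + Nat.b2n (Nat.odd n)))).
Proof.
  intros Hn Hm. pose proof (sqrt_lt_R0 _ INR_N_pos).
  rewrite innerP_Phi_l, F_op_xpt, E_p_Phi, O_p_Phi by assumption.
  rewrite (csum_ext _ (fun u => wave (IZR (Z.of_nat n - Z.of_nat N)) m (N + u))
                      (fun t => Cmult (wave (INR n) m t) (expi (INR (n + t) * PI))))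
    by (intros; apply wave_shift_N).
  rewrite <- INR_IZR_INZ, <- Cmult_plus_distr_l, <- csum_add.
  assert (Hsum : csum N (fun t => Cplus (wave (INR n) m t)
                                        (Cmult (wave (INR n) m t) (expi (INR (n + t) * PI))))
                 = Cmult (RtoC 2) (csum h (fun a => wave (INR n) m (2 * a + Nat.b2n (Nat.odd n))))).
  { rewrite N_double, <- csum_parity_filter. apply csum_ext. intros. ring. }
  rewrite Hsum, !Cmult_assoc, <- !RtoC_mult. do 2 f_equal. field. lra.
Qed.

Let half_N : (N / 2)%nat = h.
Proof. rewrite N_double, Nat.mul_comm, Nat.div_mul; lia. Qed.

Lemma Mmat_lo n a m : (a < h)%nat -> (m < h)%nat ->
  Mmat N n a m =
  Cmult (expi (INR (Nat.b2n (Nat.odd n)) * (PI * (INR n - 2 * INR m) / INR N))) (Fhalf N a m).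
Proof.
  intros Ha Hm. unfold Mmat. cbv zeta. rewrite half_N.
  destruct (Nat.ltb_spec a h), (Nat.ltb_spec m h); try lia. simpl andb.
  rewrite <- Nat.negb_odd. destruct (Nat.odd n); simpl.
  - rewrite Rmult_1_l. reflexivity.
  - rewrite Rmult_0_l, expi_0. ring.
Qed.

Lemma Mmat_hi n b m : (b < h)%nat -> (h <= m)%nat ->
  Mmat N n (h + b) m =
  Cmult (expi (INR (Nat.b2n (Nat.odd n)) * (PI * (INR n - (2 * INR m - INR N)) / INR N)))
        (Fhalf N b (m - h)).
Proof.
  intros Hb Hm. unfold Mmat. cbv zeta. rewrite half_N.
  destruct (Nat.ltb_spec (h + b) h), (Nat.leb_spec h (h + b)), (Nat.leb_spec h m); try lia.
  rewrite Bool.andb_false_l. simpl andb. replace (h + b - h)%nat with b by lia.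
  rewrite <- Nat.negb_odd. destruct (Nat.odd n); simpl.
  - rewrite Rmult_1_l. reflexivity.
  - rewrite Rmult_0_l, expi_0. ring.
Qed.

Lemma Mmat_off n a m : (a < h <= m)%nat \/ (m < h <= a)%nat -> Mmat N n a m = RtoC 0.
Proof.
  intros Hblocks. unfold Mmat. cbv zeta. rewrite half_N.
  destruct (Nat.ltb_spec a h), (Nat.ltb_spec m h), (Nat.leb_spec h a), (Nat.leb_spec h m);
    try lia; reflexivity.
Qed.

Lemma FNinv_mul_Fhalf n a phi b k :
  Cmult (FNinv N n a) (Cmult (expi phi) (Fhalf N b k)) =
  Cmult (RtoC (sqrt 2 / INR N))
    (expi (2 * PI * INR n * INR a / INR N + phi - 2 * PI * INR b * INR k / (INR N / 2))).
Proof.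
  unfold FNinv, Fhalf. rewrite <- inv_sqrt_mul_inv_sqrt_half by exact INR_N_pos.
  unfold Rminus. rewrite !expi_add, RtoC_mult. ring.
Qed.

Lemma fourier_block_lo n m : (m < h)%nat ->
  csum N (fun a => Cmult (FNinv N n a) (Mmat N n a m)) =
  Cmult (RtoC (sqrt 2 / INR N))
    (csum h (fun a => wave (INR n) m (2 * a + Nat.b2n (Nat.odd n)))).
Proof.
  intros Hm. rewrite N_double at 1. replace (2 * h)%nat with (h + h)%nat by lia.
  rewrite csum_split, (csum_eq0 h (fun b => Cmult _ (Mmat N n (h + b) m))), Cplus_0_r.
  - rewrite <- csum_scal. apply csum_ext. intros a Ha.
    rewrite Mmat_lo, FNinv_mul_Fhalf by assumption. unfold wave. do 2 f_equal.
    rewrite plus_INR, mult_INR. simpl INR. field. lra.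
  - intros b Hb. rewrite Mmat_off by lia. ring.
Qed.

Lemma fourier_block_hi n m : (h <= m)%nat ->
  csum N (fun a => Cmult (FNinv N n a) (Mmat N n a m)) =
  Cmult (RtoC (sqrt 2 / INR N))
    (csum h (fun a => wave (INR n) m (2 * a + Nat.b2n (Nat.odd n)))).
Proof.
  intros Hm. rewrite N_double at 1. replace (2 * h)%nat with (h + h)%nat by lia.
  rewrite csum_split, (csum_eq0 h), Cplus_0_l.
  - rewrite <- csum_scal. apply csum_ext. intros b Hb.
    rewrite Mmat_hi, FNinv_mul_Fhalf by assumption. unfold wave. f_equal.
    (* the block offset contributes the phase pi (n + eps) + 2 pi b, and n + eps is even *)
    apply (expi_congr_2PI _ _ 0 (Nat.div2 n + Nat.b2n (Nat.odd n) + b)).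
    assert (Hn : INR n = 2 * INR (Nat.div2 n) + INR (Nat.b2n (Nat.odd n))).
    { rewrite (Nat.div2_odd n) at 1. rewrite plus_INR, mult_INR. reflexivity. }
    rewrite !plus_INR, !mult_INR, minus_INR, INR_h, Hn by assumption. simpl INR. field. lra.
  - intros a Ha. rewrite Mmat_off by lia. ring.
Qed.

End EvenN.
End Model.

Theorem mainTheorem6 (N : nat) (hN : (0 < N)%nat) (heven : Nat.even N = true)
  (n m : nat) (hn : (n < N)%nat) (hm : (m < N)%nat) :
  innerP N (Phi N (Z.of_nat n)) (F_op N (Phi N (Z.of_nat m)))
  = csum N (fun a => Cmult (FNinv N n a) (Mmat N n a m)).
Proof.
  apply Nat.even_spec in heven as [h N_double].
  rewrite (innerP_Phi_F_Phi N hN h N_double) by assumption.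
  destruct (Nat.lt_ge_cases m h).
  - rewrite (fourier_block_lo N hN h N_double) by assumption. reflexivity.
  - rewrite (fourier_block_hi N hN h N_double) by assumption. reflexivity.
Qed.
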